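(* Let $K\subset\mathbb{R}^n$ be a nonempty compact convex set and let $\{\mathbb{A}_m\}_{m\in\mathbb{N}}$ be a sequence of isometries of $\mathbb{R}^n$. Suppose that the sequence \[K_m=\frac{1}{m}\sum_{j=1}^m \mathbb{A}_j K\] converges in the Hausdorff metric. Then for every nonempty compact set $C\subset\mathbb{R}^n$ with $\mathrm{conv}(C)=K$, the sequence \[C_m=\frac{1}{m}\sum_{j=1}^m \mathbb{A}_j C\] also converges in the Hausdorff metric, and its limit coincides with the limit of $\{K_m\}$.
   Context: For sets $X,Y\subset\mathbb{R}^n$ and $t\ge 0$, $X+Y=\{x+y:x\in X,y\in Y\}$ is the Minkowski sum and $tX=\{tx:x\in X\}$; $\sum_{j=1}^m X_j$ denotes iterated Minkowski sum. $\mathrm{conv}(C)$ is the convex hull of $C$. The Hausdorff distance between sets $A,B$ is $d_H(A,B)=\max\{\sup_{x\in B}d(x,A),\sup_{x\in A}d(x,B)\}$. *)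

From HB Require Import structures.
From mathcomp Require Import all_boot all_order all_algebra.
From mathcomp Require Import all_classical all_reals all_analysis.
Set Implicit Arguments. Unset Strict Implicit. Unset Printing Implicit Defensive.
Import Order.TTheory GRing.Theory Num.Theory.
Import numFieldNormedType.Exports.
Local Open Scope classical_set_scope.
Local Open Scope ring_scope.

Section Defs.
Variables (R : realType) (n : nat).
Local Notation V := 'rV[R]_n.

Definition edist (x y : V) : R :=
  Num.sqrt (\sum_(i < n) (x ord0 i - y ord0 i) ^+ 2).

Definition is_isometry (f : V -> V) : Prop :=
  forall x y, edist (f x) (f y) = edist x y.

Definition msum (X Y : set V) : set V := [set x + y | x in X & y in Y].
Definition mscale (t : R) (X : set V) : set V := [set t *: x | x in X].

(* msumn F m = F 1 + ... + F m  (Minkowski), with msumn F 0 = {0} *)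
Fixpoint msumn (F : nat -> set V) (m : nat) : set V :=
  match m with
  | 0 => [set 0]
  | k.+1 => msum (msumn F k) (F k.+1)
  end.

Definition convex_set_ (S : set V) : Prop :=
  forall x y t, S x -> S y -> 0 <= t -> t <= 1 -> S ((1 - t) *: x + t *: y).
Definition chull (C : set V) : set V :=
  \bigcap_(S in [set S | convex_set_ S /\ C `<=` S]) S.

Definition pdist (x : V) (A : set V) : R := inf [set edist x y | y in A].
Definition hausdorff (A B : set V) : R :=
  Num.max (sup [set pdist x A | x in B]) (sup [set pdist x B | x in A]).

Definition hconv (S : nat -> set V) (L : set V) : Prop :=
  (fun m => hausdorff (S m) L) @ \oo --> (0 : R^o).

Definition avg_sum (A : nat -> V -> V) (X : set V) (m : nat) : set V :=
  mscale (m%:R)^-1 (msumn (fun j => A j @` X) m).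
End Defs.

From Pilot Require Import Defs.
From HB Require Import structures.
From mathcomp Require Import all_boot all_order all_algebra.
From mathcomp Require Import all_classical all_reals all_analysis.
From mathcomp Require Import ring lra.
Import Order.TTheory GRing.Theory Num.Theory.
Import numFieldNormedType.Exports.
Local Open Scope classical_set_scope.
Local Open Scope ring_scope.
Set Implicit Arguments. Unset Strict Implicit. Unset Printing Implicit Defensive.

(* Since conv C = K, the averages C_m lie inside K_m, so it is enough to
   approximate every point of K_m by a point of C_m up to O(1/sqrt m).
   A point of m K_m is a sum of terms A_j k_j, each k_j a convex combination
   of points c of C; isometries are affine, so A_j k_j is the same convex
   combination of the A_j c.  Trade the summands one at a time, choosing the
   A_j c that minimises the new squared error: averaged over the convex
   weights, the new squared error is the old one plus the variance of the A_j c
   around A_j k_j (the cross term vanishes), and this variance is at most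
   diam(K)^2.  So the squared error after m steps is at most m diam(K)^2, and
   after dividing by m the distance is at most diam(K) / sqrt m. *)

Section Euclidean.
Variables (R : realType) (n : nat).
Implicit Types (x y z : 'rV[R]_n) (a : R).

Definition dot x y : R := \sum_(i < n) x ord0 i * y ord0 i.
Definition sqnorm x : R := dot x x.
Definition enorm x : R := Num.sqrt (sqnorm x).

Lemma dotC x y : dot x y = dot y x.
Proof. by apply: eq_bigr => i _; rewrite mulrC. Qed.

Lemma dotDl x y z : dot (x + y) z = dot x z + dot y z.
Proof. by rewrite /dot -big_split; apply: eq_bigr => i _; rewrite !mxE mulrDl. Qed.

Lemma dotZl a x y : dot (a *: x) y = a * dot x y.
Proof. by rewrite /dot mulr_sumr; apply: eq_bigr => i _; rewrite !mxE mulrA. Qed.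

Lemma dotNl x y : dot (- x) y = - dot x y.
Proof. by rewrite -scaleN1r dotZl mulN1r. Qed.

Lemma dotBl x y z : dot (x - y) z = dot x z - dot y z.
Proof. by rewrite dotDl dotNl. Qed.

Lemma dot0l x : dot 0 x = 0.
Proof. by rewrite -(scale0r 0) dotZl mul0r. Qed.

Lemma dotDr x y z : dot x (y + z) = dot x y + dot x z.
Proof. by rewrite dotC dotDl !(dotC x). Qed.

Lemma dotZr a x y : dot x (a *: y) = a * dot x y.
Proof. by rewrite dotC dotZl dotC. Qed.

Lemma dotBr x y z : dot x (y - z) = dot x y - dot x z.
Proof. by rewrite dotC dotBl !(dotC x). Qed.

Lemma dot0r x : dot x 0 = 0.
Proof. by rewrite dotC dot0l. Qed.

Lemma dot_suml (I : Type) (r : seq I) (P : pred I) (F : I -> 'rV[R]_n) y :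
  dot (\sum_(i <- r | P i) F i) y = \sum_(i <- r | P i) dot (F i) y.
Proof.
rewrite /dot exchange_big; apply: eq_bigr => j _.
by rewrite summxE mulr_suml.
Qed.

Lemma dot_sumr (I : Type) (r : seq I) (P : pred I) (F : I -> 'rV[R]_n) x :
  dot x (\sum_(i <- r | P i) F i) = \sum_(i <- r | P i) dot x (F i).
Proof. by rewrite dotC dot_suml; apply: eq_bigr => i _; rewrite dotC. Qed.

Lemma sqnorm_ge0 x : 0 <= sqnorm x.
Proof. by apply: sumr_ge0 => i _; rewrite -expr2 sqr_ge0. Qed.

Lemma sqnorm_eq0 x : sqnorm x = 0 -> x = 0.
Proof.
move=> x0; apply/rowP => i; rewrite mxE.
have sq0 j : true -> 0 <= x ord0 j * x ord0 j by rewrite -expr2 sqr_ge0.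
by apply/eqP; rewrite -sqrf_eq0 expr2; apply/eqP/(psumr_eq0P sq0 x0).
Qed.

Lemma sqnormD x y : sqnorm (x + y) = sqnorm x + 2 * dot x y + sqnorm y.
Proof. by rewrite /sqnorm !dotDl !dotDr (dotC y x); ring. Qed.

Lemma sqnormB x y : sqnorm (x - y) = sqnorm x - 2 * dot x y + sqnorm y.
Proof. by rewrite /sqnorm !dotBl !dotBr (dotC y x); ring. Qed.

Lemma sqnormZ a x : sqnorm (a *: x) = a ^+ 2 * sqnorm x.
Proof. by rewrite /sqnorm dotZl dotZr mulrA expr2. Qed.

Lemma sqnormN x : sqnorm (- x) = sqnorm x.
Proof. by rewrite -scaleN1r sqnormZ sqrrN expr1n mul1r. Qed.

Lemma sqnorm0 : sqnorm 0 = 0.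
Proof. exact: dot0l. Qed.

Lemma cauchy_schwarz x y : dot x y ^+ 2 <= sqnorm x * sqnorm y.
Proof.
have [/sqnorm_eq0 ->|y0] := eqVneq (sqnorm y) 0.
  by rewrite dot0r sqnorm0 expr0n mulr0.
have y_gt0 : 0 < sqnorm y by rewrite lt0r y0 sqnorm_ge0.
(* expand [0 <= |x - t y|^2] at the minimizing [t = <x, y> / |y|^2] *)
have := sqnorm_ge0 (x - (dot x y / sqnorm y) *: y).
rewrite sqnormB sqnormZ dotZr.
have -> : sqnorm x - 2 * (dot x y / sqnorm y * dot x y) +
    (dot x y / sqnorm y) ^+ 2 * sqnorm y =
  (sqnorm x * sqnorm y - dot x y ^+ 2) / sqnorm y by field.
by rewrite pmulr_lge0 ?invr_gt0 // subr_ge0.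
Qed.

Lemma enorm_ge0 x : 0 <= enorm x.
Proof. exact: sqrtr_ge0. Qed.

Lemma sqr_enorm x : enorm x ^+ 2 = sqnorm x.
Proof. exact/sqr_sqrtr/sqnorm_ge0. Qed.

Lemma enormZ a x : enorm (a *: x) = `|a| * enorm x.
Proof. by rewrite /enorm sqnormZ sqrtrM ?sqr_ge0 // sqrtr_sqr. Qed.

Lemma enormN x : enorm (- x) = enorm x.
Proof. by rewrite /enorm sqnormN. Qed.

Lemma enorm0 : enorm 0 = 0.
Proof. by rewrite /enorm sqnorm0 sqrtr0. Qed.

Lemma enormD x y : enorm (x + y) <= enorm x + enorm y.
Proof.
have dxy : dot x y <= enorm x * enorm y.
  apply: le_trans (ler_norm _) _; rewrite -sqrtr_sqr -sqrtrM ?sqnorm_ge0 //.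
  by rewrite ler_sqrt ?cauchy_schwarz // mulr_ge0 ?sqnorm_ge0.
rewrite -(ger0_norm (addr_ge0 (enorm_ge0 x) (enorm_ge0 y))) -sqrtr_sqr.
rewrite ler_sqrt ?sqr_ge0 // sqrrD !sqr_enorm sqnormD; lra.
Qed.

Lemma edistE x y : Defs.edist x y = enorm (x - y).
Proof.
rewrite /Defs.edist /enorm /sqnorm /dot; congr Num.sqrt; apply: eq_bigr => i _.
by rewrite !mxE expr2.
Qed.

Lemma edist_ge0 x y : 0 <= Defs.edist x y.
Proof. by rewrite edistE enorm_ge0. Qed.

Lemma edist_triangle x y z : Defs.edist x z <= Defs.edist x y + Defs.edist y z.
Proof. by rewrite !edistE -[x - z](subrKA y); apply: enormD. Qed.

Lemma edist_le_enorm x y M N : enorm x <= M -> enorm y <= N ->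
  Defs.edist x y <= M + N.
Proof.
move=> xM yN; rewrite edistE; apply: le_trans (enormD _ _) _.
by rewrite enormN lerD.
Qed.

End Euclidean.

Lemma affine_sumB (R : pzRingType) (V : lmodType R) (I : Type) (r : seq I)
    (w : I -> R) (F : I -> V) y :
  \sum_(i <- r) w i = 1 -> \sum_(i <- r) w i *: (F i - y) = \sum_(i <- r) w i *: F i - y.
Proof.
by move=> w1; under eq_bigr do rewrite scalerBr; rewrite sumrB -scaler_suml w1 scale1r.
Qed.

Lemma exists_le_wmean (R : realDomainType) (I : eqType) (r : seq I) (w v : I -> R) :
  {in r, forall i, 0 <= w i} -> \sum_(i <- r) w i = 1 ->
  exists2 i, i \in r & v i <= \sum_(j <- r) w j * v j.
Proof.
move=> w_ge0 w1; set B := \sum_(j <- r) w j * v j.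
have [//|noi] := pselect (exists2 i, i \in r & v i <= B).
have gtB i : i \in r -> B < v i.
  by move=> ri; rewrite ltNge; apply/negP => viB; apply: noi; exists i.
have dev_ge0 i : i \in r -> 0 <= w i * (v i - B).
  by move=> ri; rewrite mulr_ge0 ?w_ge0 // subr_ge0 ltW ?gtB.
have /eqP : \sum_(i <- r) w i * (v i - B) = 0.
  under eq_bigr do rewrite mulrBr.
  by rewrite sumrB -mulr_suml w1 mul1r subrr.
rewrite big_seq psumr_eq0 // => /allP w0.
suff : \sum_(i <- r) w i = 0 by rewrite w1 => /eqP; rewrite oner_eq0.
apply: big1_seq => i /andP[_ ri].
have := w0 i ri; rewrite ri /= mulf_eq0 subr_eq0 => /orP[/eqP //|/eqP viB].
by have := gtB i ri; rewrite viB ltxx.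
Qed.

Section Isometry.
Variables (R : realType) (n : nat).
Local Notation V := 'rV[R]_n.
Implicit Types (f : V -> V) (x y z : V) (s : seq (R * V)).

Lemma sqnorm_sum (I : Type) (r : seq I) (w : I -> R) (u : I -> V) :
  sqnorm (\sum_(i <- r) w i *: u i) =
  \sum_(i <- r) \sum_(j <- r) w i * w j * dot (u i) (u j).
Proof.
rewrite /sqnorm dot_suml; apply: eq_bigr => i _.
rewrite dotZl dot_sumr mulr_sumr; apply: eq_bigr => j _.
by rewrite dotZr mulrA.
Qed.

Lemma isometry_sqnormB f x y : is_isometry f -> sqnorm (f x - f y) = sqnorm (x - y).
Proof. by move=> isof; rewrite -!sqr_enorm -!edistE isof. Qed.

Lemma isometry_dotB f x y z : is_isometry f ->
  dot (f x - f z) (f y - f z) = dot (x - z) (y - z).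
Proof.
move=> isof; have := isometry_sqnormB x y isof.
have diffB (u v w : V) : u - v = (u - w) - (v - w) by rewrite opprB addrA subrK.
rewrite (diffB (f x) (f y) (f z)) (diffB x y z) (sqnormB (f x - f z)) (sqnormB (x - z)).
by rewrite !isometry_sqnormB //; lra.
Qed.

Lemma isometry_affine f s : is_isometry f -> \sum_(p <- s) p.1 = 1 ->
  f (\sum_(p <- s) p.1 *: p.2) = \sum_(p <- s) p.1 *: f p.2.
Proof.
move=> isof s1; set z := \sum_(p <- s) _; apply/eqP; rewrite eq_sym -subr_eq0.
rewrite -(affine_sumB (w := fst) (f \o snd)) //; apply/eqP/sqnorm_eq0.
rewrite sqnorm_sum /=.
under eq_bigr do under eq_bigr do rewrite isometry_dotB //.
by rewrite -sqnorm_sum affine_sumB // subrr sqnorm0.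
Qed.

End Isometry.

Section ConvexCombinations.
Variables (R : realType) (n : nat).
Local Notation V := 'rV[R]_n.
Implicit Types C : set V.

Definition convex_comb C : set V :=
  [set x | exists s, [/\ {in s, forall p, 0 <= p.1 /\ C p.2},
    \sum_(p <- s) p.1 = 1 & x = \sum_(p <- s) p.1 *: p.2]].

Lemma convex_comb_convex C : convex_set_ (convex_comb C).
Proof.
move=> _ _ t [s1 [s1C s1_1 ->]] [s2 [s2C s2_1 ->]] t0 t1.
exists ([seq ((1 - t) * p.1, p.2) | p <- s1] ++ [seq (t * p.1, p.2) | p <- s2]).
split.
- move=> q; rewrite mem_cat => /orP[] /mapP[p sp ->] /=.
    by have [w0 Cp] := s1C p sp; rewrite mulr_ge0 // subr_ge0.
  by have [w0 Cp] := s2C p sp; rewrite mulr_ge0.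
- by rewrite big_cat !big_map /= -!mulr_sumr s1_1 s2_1 !mulr1 subrK.
- rewrite big_cat !big_map !scaler_sumr /=.
  by congr (_ + _); apply: eq_bigr => p _; rewrite scalerA.
Qed.

Lemma sub_chull C : C `<=` chull C.
Proof. by move=> x Cx S [_]; apply. Qed.

Lemma chull_sub_convex_comb C : chull C `<=` convex_comb C.
Proof.
move=> x; apply; split; first exact: convex_comb_convex.
move=> y Cy; exists [:: (1, y)].
by split; rewrite ?big_seq1 ?scale1r // => p; rewrite inE => /eqP ->.
Qed.

End ConvexCombinations.

Section Approximation.
Variables (R : realType) (n : nat).
Local Notation V := 'rV[R]_n.
Implicit Types (f : V -> V) (s : seq (R * V)) (C K : set V).

Lemma sqnormD_wmean s w : \sum_(p <- s) p.1 = 1 ->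
  \sum_(p <- s) p.1 * sqnorm (w + (\sum_(q <- s) q.1 *: q.2 - p.2)) =
  sqnorm w + \sum_(p <- s) p.1 * sqnorm (\sum_(q <- s) q.1 *: q.2 - p.2).
Proof.
move=> s1; set z := \sum_(q <- s) q.1 *: q.2.
have dev0 : \sum_(p <- s) p.1 *: (z - p.2) = 0.
  by under eq_bigr do rewrite scalerBr; rewrite sumrB -scaler_suml s1 scale1r subrr.
have cross0 : \sum_(p <- s) p.1 * (2 * dot w (z - p.2)) = 0.
  transitivity (2 * dot w (\sum_(p <- s) p.1 *: (z - p.2))).
    by rewrite dot_sumr mulr_sumr; apply: eq_bigr => p _; rewrite dotZr; ring.
  by rewrite dev0 dot0r mulr0.
under eq_bigr do rewrite sqnormD !mulrDr.
by rewrite !big_split /= -mulr_suml s1 mul1r cross0 addr0.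
Qed.

Lemma isometry_convex_comb_step f C (w k : V) D :
  is_isometry f -> convex_comb C k -> (forall c, C c -> sqnorm (k - c) <= D) ->
  exists2 c, C c & sqnorm (w + (f k - f c)) <= sqnorm w + D.
Proof.
move=> isof [s [sC s1 def_k]] kD.
have w_ge0 : {in s, forall p, 0 <= p.1} by move=> p /sC[].
have [p sp le_mean] :=
  exists_le_wmean (fun p : R * V => sqnorm (w + (f k - f p.2))) w_ge0 s1.
exists p.2; first by have [] := sC p sp.
apply: le_trans le_mean _.
have fk : f k = \sum_(q <- s) q.1 *: f q.2 by rewrite def_k isometry_affine.
have s1' : \sum_(q <- [seq (p.1, f p.2) | p <- s]) q.1 = 1 by rewrite big_map.
have := sqnormD_wmean w s1'; rewrite !big_map /= -fk => ->.
rewrite lerD2l -[X in _ <= X]mul1r -s1 mulr_suml big_seq [X in _ <= X]big_seq.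
apply: ler_sum => q sq; rewrite isometry_sqnormB //.
by apply: ler_wpM2l; [exact: w_ge0 | apply: kD; have [] := sC q sq].
Qed.

Lemma msumn_isometry_approx (A : nat -> V -> V) K C D :
  (forall j, is_isometry (A j)) -> K `<=` convex_comb C ->
  (forall x c, K x -> C c -> sqnorm (x - c) <= D) ->
  forall m x, msumn (fun j => A j @` K) m x ->
  exists2 y, msumn (fun j => A j @` C) m y & sqnorm (x - y) <= m%:R * D.
Proof.
move=> isoA KC KCD; elim=> [|m IH] x' /=.
  by move=> ->; exists 0; rewrite // subrr sqnorm0 mul0r.
case=> [x mx [_ [k Kk <-] <-]]; have [y my xy] := IH x mx.
have [c Cc le_step] := isometry_convex_comb_step (x - y) (isoA m.+1) (KC k Kk)
  (fun c => KCD k c Kk).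
exists (y + A m.+1 c); first by exists y => //; exists (A m.+1 c) => //; exists c.
rewrite opprD addrACA; apply: le_trans le_step _.
by rewrite -natr1 mulrDl mul1r lerD2r.
Qed.

Lemma avg_sum_approx (A : nat -> V -> V) K C D :
  (forall j, is_isometry (A j)) -> K `<=` convex_comb C ->
  (forall x c, K x -> C c -> sqnorm (x - c) <= D) ->
  forall m x, avg_sum A K m x ->
  exists2 y, avg_sum A C m y & Defs.edist x y <= Num.sqrt (D / m%:R).
Proof.
move=> isoA KC KCD m _ [x mx <-].
have [y my xy] := msumn_isometry_approx isoA KC KCD mx.
exists (m%:R^-1 *: y); first by exists y.
rewrite edistE -scalerBr /enorm sqnormZ; apply: ler_wsqrtr.
apply: le_trans (ler_wpM2l (sqr_ge0 _) xy) _; rewrite expr2 -mulrA.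
have [->|m0] := eqVneq m 0%N; first by rewrite mulr0n invr0 !mul0r mulr0.
by rewrite mulKf ?pnatr_eq0 // mulrC.
Qed.

End Approximation.

Section Boundedness.
Variables (R : realType) (n : nat).
Local Notation V := 'rV[R]_n.
Implicit Types (x y : V) (X Y : set V).

Definition ebounded X := exists M, forall x, X x -> enorm x <= M.

Lemma normr_coord_le x (i : 'I_n) : `|x ord0 i| <= `|x|.
Proof.
rewrite [`|x|]mx_normrE.
exact: (le_bigmax _ (fun ij : 'I_1 * 'I_n => `|x ij.1 ij.2|) (ord0, i)).
Qed.

Lemma enorm_le_norm x : enorm x <= Num.sqrt n%:R * `|x|.
Proof.
rewrite -[`|x|]ger0_norm // -sqrtr_sqr -sqrtrM // ler_wsqrtr //.
have -> : n%:R * `|x| ^+ 2 = \sum_(i < n) `|x| ^+ 2.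
  by rewrite sumr_const card_ord mulr_natl.
apply: ler_sum => i _; rewrite -expr2 -real_normK ?num_real //.
by rewrite lerXn2r ?nnegrE ?normr_coord_le.
Qed.

Lemma compact_ebounded X : compact X -> ebounded X.
Proof.
move=> /compact_bounded [M [_ XM]]; exists (Num.sqrt n%:R * (M + 1)) => x Xx.
apply: le_trans (enorm_le_norm x) _; rewrite ler_wpM2l //.
by apply: XM => //; rewrite ltrDl.
Qed.

Lemma ebounded_msum X Y : ebounded X -> ebounded Y -> ebounded (Defs.msum X Y).
Proof.
move=> [M XM] [N YN]; exists (M + N) => _ [x Xx [y Yy <-]].
by apply: le_trans (enormD _ _) _; rewrite lerD ?XM ?YN.
Qed.

Lemma ebounded_mscale (t : R) X : ebounded X -> ebounded (Defs.mscale t X).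
Proof.
by move=> [M XM]; exists (`|t| * M) => _ [x Xx <-]; rewrite enormZ ler_wpM2l ?XM.
Qed.

Lemma ebounded_isometry_image (f : V -> V) X :
  is_isometry f -> ebounded X -> ebounded (f @` X).
Proof.
move=> isof [M XM]; exists (M + enorm (f 0)) => _ [x Xx <-].
rewrite -[f x](subrK (f 0)); apply: le_trans (enormD _ _) _.
by rewrite lerD2r -edistE isof edistE subr0 XM.
Qed.

Lemma ebounded_msumn (F : nat -> set V) m :
  (forall j, ebounded (F j)) -> ebounded (msumn F m).
Proof.
move=> bF; elim: m => [|m IH] /=; last exact: ebounded_msum.
by exists 0 => _ ->; rewrite enorm0.
Qed.

Lemma msumn_nonempty (F : nat -> set V) m :
  (forall j, F j !=set0) -> msumn F m !=set0.
Proof.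
move=> F0; elim: m => [|m [x mx]] /=; first by exists 0.
by have [y Fy] := F0 m.+1; exists (x + y); exists x => //; exists y.
Qed.

Lemma msumnS (F G : nat -> set V) m :
  (forall j, F j `<=` G j) -> msumn F m `<=` msumn G m.
Proof.
move=> FG; elim: m => [|m IH] //= _ [x mx [y Fy <-]].
by exists x; [exact: IH | exists y => //; exact: FG].
Qed.

Section AvgSum.
Variables (A : nat -> V -> V) (m : nat).

Lemma avg_sum_nonempty X : X !=set0 -> avg_sum A X m !=set0.
Proof.
move=> [x Xx]; have [y my] := msumn_nonempty m (fun j => image_nonempty (A j) (ex_intro _ x Xx)).
by exists (m%:R^-1 *: y), y.
Qed.

Lemma avg_sumS X Y : X `<=` Y -> avg_sum A X m `<=` avg_sum A Y m.
Proof.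
move=> XY _ [y my <-]; exists y => //.
by apply: msumnS my => j _ [x Xx <-]; exists x => //; apply: XY.
Qed.

Lemma ebounded_avg_sum X : (forall j, is_isometry (A j)) -> ebounded X ->
  ebounded (avg_sum A X m).
Proof.
move=> isoA bX; apply/ebounded_mscale/ebounded_msumn => j.
exact: ebounded_isometry_image.
Qed.

End AvgSum.

End Boundedness.

Section Hausdorff.
Variables (R : realType) (n : nat).
Local Notation V := 'rV[R]_n.
Implicit Types (x y : V) (S T X Y L : set V).

Lemma pdist_le x X y : X y -> pdist x X <= Defs.edist x y.
Proof.
by move=> Xy; apply: ge_inf; [exists 0 => _ [z _ <-]; exact: edist_ge0 | exists y].
Qed.

Lemma pdist_ge0 x X : X !=set0 -> 0 <= pdist x X.
Proof.
move=> [y Xy]; apply: lb_le_inf; first by exists (Defs.edist x y), y.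
by move=> _ [z _ <-]; exact: edist_ge0.
Qed.

Lemma pdist_le_approx x S T eps : T !=set0 ->
  (forall t, T t -> exists2 s, S s & Defs.edist t s <= eps) ->
  pdist x S <= pdist x T + eps.
Proof.
move=> [t0 Tt0] TS; rewrite -lerBlDr; apply: lb_le_inf.
  by exists (Defs.edist x t0), t0.
move=> _ [t Tt <-]; have [s Ss ts] := TS t Tt; rewrite lerBlDr.
apply: le_trans (pdist_le x Ss) _; apply: le_trans (edist_triangle x t s) _.
by rewrite lerD2l.
Qed.

Lemma pdist_le_sup X Y y : X !=set0 -> ebounded X -> ebounded Y -> Y y ->
  pdist y X <= sup [set pdist z X | z in Y].
Proof.
move=> [x0 Xx0] [MX XM] [MY YM] Yy; apply: sup_upper_bound; last by exists y.
split; first by exists (pdist y X), y.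
exists (MY + MX) => _ [z Yz <-]; apply: le_trans (pdist_le z Xx0) _.
exact: edist_le_enorm (YM z Yz) (XM x0 Xx0).
Qed.

Lemma hausdorff_ge0 S L : S !=set0 -> L !=set0 -> ebounded S -> ebounded L ->
  0 <= hausdorff S L.
Proof.
move=> [s Ss] L0 bS bL; rewrite /hausdorff le_max; apply/orP; right.
by apply: le_trans (pdist_ge0 s L0) (pdist_le_sup L0 bL bS Ss).
Qed.

Lemma hausdorff_le_approx S T L eps :
  S !=set0 -> S `<=` T -> ebounded T -> L !=set0 -> ebounded L ->
  (forall t, T t -> exists2 s, S s & Defs.edist t s <= eps) ->
  hausdorff S L <= hausdorff T L + eps.
Proof.
move=> [s0 Ss0] ST bT L0 bL TS.
have T0 : T !=set0 by exists s0; apply: ST.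
have eps_ge0 : 0 <= eps.
  by have [s _ ts] := TS s0 (ST s0 Ss0); apply: le_trans (edist_ge0 _ _) ts.
rewrite /hausdorff ge_max; apply/andP; split.
- apply: ge_sup; first by case: L0 => y Ly; exists (pdist y S), y.
  move=> _ [y Ly <-]; apply: le_trans (pdist_le_approx y T0 TS) _.
  by rewrite lerD2r le_max pdist_le_sup.
- rewrite -[X in X <= _]addr0; apply: lerD => //.
  rewrite le_max; apply/orP; right; apply: ge_sup; first by exists (pdist s0 L), s0.
  by move=> _ [x Sx <-]; apply: pdist_le_sup => //; apply: ST.
Qed.

End Hausdorff.

Lemma cvg_sqrt_div_natr (R : realType) (D : R) :
  Num.sqrt (D / m%:R) @[m --> \oo] --> 0.
Proof.
have inv0 : (m%:R^-1 : R) @[m --> \oo] --> 0.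
  apply/gtr0_cvgV0; last exact: cvgr_idn.
  by near=> m; rewrite ltr0n; near: m; exact: nbhs_infty_gt.
rewrite -sqrtr0 -(mulr0 D); apply: continuous_cvg; first exact: sqrt_continuous.
exact: cvgM (cvg_cst D) inv0.
Unshelve. all: by end_near.
Qed.

Lemma hconv_approx (R : realType) (n : nat) (S T : nat -> set 'rV[R]_n)
    (L : set 'rV[R]_n) (eps : nat -> R) :
  (forall m, S m !=set0) -> (forall m, S m `<=` T m) ->
  (forall m, ebounded (T m)) -> L !=set0 -> ebounded L ->
  (forall m t, T m t -> exists2 s, S m s & Defs.edist t s <= eps m) ->
  eps @ \oo --> 0 -> hconv T L -> hconv S L.
Proof.
move=> S0 ST bT L0 bL TS eps0 TL.
have bS m : ebounded (S m).
  by have [M TM] := bT m; exists M => x /(ST m); apply: TM.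
apply: (squeeze_cvgr (h := fun m => hausdorff (T m) L + eps m)) (cvg_cst 0) _.
  apply: filterE => m; rewrite hausdorff_ge0 //=.
  exact: (hausdorff_le_approx (S0 m) (ST m) (bT m) L0 bL (TS m)).
by rewrite -[0](addr0 0); apply: cvgD.
Qed.

Unset Implicit Arguments.
Set Strict Implicit.

Theorem theorem2 (R : realType) (n : nat) (K : set 'rV[R]_n)
  (A : nat -> 'rV[R]_n -> 'rV[R]_n) :
  K !=set0 -> compact K -> convex_set_ K ->
  (forall m, is_isometry (A m)) ->
  (exists L : set 'rV[R]_n, L !=set0 /\ compact L /\ hconv (avg_sum A K) L) ->
  forall C : set 'rV[R]_n, C !=set0 -> compact C -> chull C = K ->
  exists L : set 'rV[R]_n, L !=set0 /\ compact L /\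
    hconv (avg_sum A K) L /\ hconv (avg_sum A C) L.
Proof.
move=> _ cK _ isoA [L [L0 [cL KL]]] C C0 _ hullC.
exists L; do !split => //.
have CK : C `<=` K by rewrite -hullC; exact: sub_chull.
have KC : K `<=` convex_comb C by rewrite -hullC; exact: chull_sub_convex_comb.
have [M KM] := compact_ebounded cK.
have KCD x c : K x -> C c -> sqnorm (x - c) <= (M + M) ^+ 2.
  move=> Kx Cc; have xc := edist_le_enorm (KM x Kx) (KM c (CK c Cc)).
  rewrite -sqr_enorm -edistE lerXn2r ?nnegrE ?edist_ge0 //.
  exact: le_trans (edist_ge0 x c) xc.
apply: (hconv_approx (T := avg_sum A K)
  (eps := fun m => Num.sqrt ((M + M) ^+ 2 / m%:R))) KL => //.
- by move=> m; apply: avg_sum_nonempty.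
- by move=> m; apply: avg_sumS.
- by move=> m; apply: ebounded_avg_sum => //; exists M.
- exact: compact_ebounded.
- exact: avg_sum_approx isoA KC KCD.
- exact: cvg_sqrt_div_natr.
Qed.
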